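(* Let $(D,D_{t'})$ be a proper pair (in the sense allowing contemporaneous effects, with $D$ a tailed directed graph on $V\cup W$ and $t'\geq 1$) and assume the $d$-separation Markov property holds in $D_{t'}$ for the time series with baseline variables $X$ with index sets $(V,W)$. Let $A,C\subseteq V\cup W$ and $B\subseteq V$ be pairwise disjoint. If $A\cap \mathrm{an}_\bullet(B)=\emptyset$ and $(\mathrm{an}^V_\bullet(B)\cap C)\cup B$ is $\delta$-separated from $A$ given $C\setminus \mathrm{an}^V_\bullet(B)$ in $D$, then $X^B$ is locally independent of $X^A$ given $X^C$ until time $t'$.
   Context: Time series with baseline variables: $V$, $W$ finite disjoint index sets; $X=\{X_t\}_{t\ge0}$ with $X_0$ a random vector indexed by $V\cup W$ and $X_t$ ($t\ge1$) indexed by $V$. $X_t^A$ is the subvector indexed by $A$; $\overline X_t^A=\{X_s^i:i\in A,s\le t\}$ (baseline variables only at $s=0$). Local independence: for pairwise disjoint $A,B,C\subseteq V\cup W$ with $B\subseteq V$, $X^B$ is locally independent of $X^A$ given $X^C$ until time $t'$ if for every $t=1,\dots,t'$, $\overline X^A_{t-1}$ and $X_t^B$ are conditionally independent given $\overline X^{B\cup C}_{t-1}$. Tailed directed graph: a graph on $V\cup W$ with directed edges $i\to j$ and tailed directed edges $i\bullet\!\!\to j$; $i\ast\!\!\to j$ means $i\to j$ or $i\bullet\!\!\to j$ (if $i\bullet\!\!\to j$ is present, $i\to j$ is omitted). Only baseline nodes have edges into baseline nodes, and these are tailed. $D^-$ is the DG with $i\to j$ iff $i\ast\!\!\to j$ in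 $D$. $\mathrm{an}_\bullet(B)$: nodes $k$ with a directed path $k\bullet\!\!\to\cdots\bullet\!\!\to j$, $j\in B$, of tailed edges only; $\mathrm{de}_\bullet(B)$: nodes reachable from $B$ by such paths; $\mathrm{pa}_\bullet(B)$: nodes $k$ with $k\bullet\!\!\to j$, $j\in B$; by convention these three sets exclude $B$. $\mathrm{an}^V_\bullet(B)=\mathrm{an}_\bullet(B)\cap V$. DG terminology: path = walk without repeated nodes; collider = non-endpoint node with both adjacent edges pointing into it; $\mathrm{an}(C)$ = nodes with a directed path to $C$ (excluding the endpoint itself), $\mathrm{an}^+(C)=\mathrm{an}(C)\cup C$. $\delta$-separation in a DG $G$: with $G^B$ obtained by deleting all edges $i\to j$ with $i\in B$, $B$ is $\delta$-separated from $A$ given $C$ if every path in $G^B$ between $A$ and $B$ contains a noncollider in $C$ or a collider not in $\mathrm{an}_G(C)\cup C$. In a tailed directed graph $D$, $\delta$-separation means $\delta$-separation in $D^-$. $d$-separation in a DAG: same condition on paths of the DAG, no deletion. Unrolling (contemporaneous): the unrolled version of tailed directed graph $D$ on $t'$ lags is the DAG $D_{t'}$ on $V^{t'}\cup W^{t'}$, $V^{t'}=\bigcup_{i\in V}\{\nu_0^i,\dots,\nu^i_{t'}\}$, $W^{t'}=\{\nu_0^i:i\in W\}$, with $\nu_s^i\to\nu_t^j$ if $s<t$ and $i\ast\!\!\to j$, and $\nu_t^i\to\nu_t^j$ if $i\bullet\!\!\to j$. Rolling: the rolled version of a DAG $D_{t'}$ on such nodes is the tailed directed graph with $i\ast\!\!\to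 j$ if $\nu_s^i\to\nu_t^j$ for some $s\le t$, and $i\bullet\!\!\to j$ iff $\nu_t^i\to\nu_t^j$ for some $t$. Standing assumption: if $\nu_t^i\to\nu_t^j$ is present then so is $\nu_s^i\to\nu_u^j$ for some $s<u$. $(D,D_{t'})$ is proper if $D$ is the rolled version of $D_{t'}$ or $D_{t'}$ is the unrolled version of $D$. Node $\nu_s^i$ represents $X_s^i$. The $d$-separation Markov property holds in $D_{t'}$ if $d$-separation of node sets $a,b$ by $c$ implies conditional independence of the corresponding variables given those of $c$. *)

From HB Require Import structures.
From mathcomp Require Import all_boot all_order all_algebra.
From mathcomp Require Import all_classical all_reals all_analysis.

Set Implicit Arguments.
Unset Strict Implicit.
Unset Printing Implicit Defensive.

Import Order.TTheory GRing.Theory Num.Theory.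
Local Open Scope classical_set_scope.
Local Open Scope ring_scope.

(** A walk from [x] is given by a list of steps [(dir, y)]; [dir = true]
    means the edge [prev -> y], [dir = false] means the edge [prev <- y]. *)
Fixpoint steps_ok (T : Type) (E : T -> T -> Prop) (x : T)
    (s : seq (bool * T)) : Prop :=
  match s with
  | [::] => True
  | (dir, y) :: s' => (if dir then E x y else E y x) /\ steps_ok E y s'
  end.

Definition walk_nodes (T : Type) (x : T) (s : seq (bool * T)) : seq T :=
  x :: map snd s.

Definition walk_end (T : Type) (x : T) (s : seq (bool * T)) : T :=
  last x (map snd s).

Definition is_path (T : eqType) (E : T -> T -> Prop) (x : T)
    (s : seq (bool * T)) : Prop :=
  steps_ok E x s /\ uniq (walk_nodes x s).

(** Non-endpoint nodes of the walk, each with a flag telling whether it is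
    a collider (both adjacent edges point into it). *)
Fixpoint walk_interior (T : Type) (s : seq (bool * T)) : seq (T * bool) :=
  match s with
  | (d1, y) :: (((d2, _) :: _) as s') => (y, d1 && ~~ d2) :: walk_interior s'
  | _ => [::]
  end.

Fixpoint dwalk (T : Type) (E : T -> T -> Prop) (x : T) (p : seq T) : Prop :=
  match p with
  | [::] => True
  | y :: p' => E x y /\ dwalk E y p'
  end.

(** an^+(C) = an(C) ∪ C : nodes with a directed path (possibly trivial) to C *)
Definition anc_plus (T : Type) (E : T -> T -> Prop) (C : T -> Prop) (x : T) :
  Prop := exists p : seq T, dwalk E x p /\ C (last x p).

Definition acyclic (T : Type) (E : T -> T -> Prop) : Prop :=
  forall (x : T) (p : seq T), p <> [::] -> dwalk E x p -> last x p <> x.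

Definition sep_gen (T : eqType) (Ep Ea : T -> T -> Prop)
    (A B C : T -> Prop) : Prop :=
  forall (x : T) (s : seq (bool * T)),
    is_path Ep x s -> A x -> B (walk_end x s) ->
    exists2 yc, yc \in walk_interior s &
      ((~~ yc.2 /\ C yc.1) \/ (yc.2 /\ ~ anc_plus Ea C yc.1)).

Definition dsep (T : eqType) (E : T -> T -> Prop) (a b c : T -> Prop) : Prop :=
  sep_gen E E a b c.

(** delta-separation in a DG G: B is delta-separated from A given C
    (paths are taken in G^B, ancestors in G). *)
Definition delta_sep (T : eqType) (G : T -> T -> Prop) (B A C : T -> Prop) :
  Prop := sep_gen (fun x y => G x y /\ ~ B x) G A B C.

(** A tailed directed graph is given by [arr i j] (meaning i *-> j, i.e. i -> j
    or i •-> j) and [tail i j] (meaning i •-> j).  Thus D^- has edge relation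
    [arr]. *)
Definition tailed_graph (I : finType) (W : {set I}) (arr tail : rel I) : Prop :=
  (forall i j, tail i j -> arr i j) /\
  (forall i j, arr i j -> j \in W -> i \in W /\ tail i j).

Definition an_tail (I : finType) (tail : rel I) (B : {set I}) (k : I) : Prop :=
  k \notin B /\ anc_plus (fun i j => tail i j) (fun j => j \in B) k.

Definition an_tail_V (I : finType) (V : {set I}) (tail : rel I) (B : {set I})
    (k : I) : Prop := k \in V /\ an_tail tail B k.

(* Unrolled DAGs: nodes nu_s^i are represented by pairs (i, s).          *)

Definition valid_node (I : finType) (W : {set I}) (t' : nat) (v : I * nat) :
  Prop := (v.2 <= t')%N /\ (v.1 \in W -> v.2 = 0%N).

Definition dag_on (I : finType) (W : {set I}) (t' : nat)
    (E : I * nat -> I * nat -> Prop) : Prop :=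
  (forall u v, E u v -> valid_node W t' u /\ valid_node W t' v) /\ acyclic E.

Definition unrolled (I : finType) (W : {set I}) (arr tail : rel I) (t' : nat)
    (E : I * nat -> I * nat -> Prop) : Prop :=
  forall u v, E u v <->
    valid_node W t' u /\ valid_node W t' v /\
    (((u.2 < v.2)%N /\ arr u.1 v.1) \/ (u.2 = v.2 /\ tail u.1 v.1)).

Definition rolled (I : finType) (W : {set I}) (arr tail : rel I) (t' : nat)
    (E : I * nat -> I * nat -> Prop) : Prop :=
  (forall u v, E u v -> (u.2 <= v.2)%N) /\
  (forall i j, arr i j <-> exists s u, (s <= u)%N /\ E (i, s) (j, u)) /\
  (forall i j, tail i j <-> exists u, E (i, u) (j, u)) /\
  (* standing assumption (for non-baseline targets j) *)
  (forall i j u, j \notin W -> E (i, u) (j, u) ->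
     exists s u', (s < u')%N /\ E (i, s) (j, u')).

Definition proper_pair (I : finType) (W : {set I}) (arr tail : rel I) (t' : nat)
    (E : I * nat -> I * nat -> Prop) : Prop :=
  rolled W arr tail t' E \/ unrolled W arr tail t' E.

Section Prob.
Context {d : measure_display} {Omega : measurableType d} {R : realType}.

Definition sigma_vars (I : Type) (X : I -> nat -> Omega -> R)
    (S : set (I * nat)) : set (set Omega) :=
  <<s [set F | exists v, S v /\
         exists Bo : set R, measurable Bo /\ F = X v.1 v.2 @^-1` Bo] >>.

(** Conditional independence of F1 and F2 given F3 (sigma-algebras):
    for every event A of F1, P(A | F2 ∨ F3) admits an F3-measurable version,
    i.e. there is an integrable F3-measurable g with
    P(A ∩ H) = ∫_H g dP for all H in sigma(F2 ∪ F3). *)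
Definition cond_indep (P : probability Omega R)
    (F1 F2 F3 : set (set Omega)) : Prop :=
  forall A, F1 A ->
    exists g : Omega -> R,
      (forall Bo : set R, measurable Bo -> F3 (g @^-1` Bo)) /\
      P.-integrable setT (EFin \o g) /\
      (forall H, <<s F2 `|` F3 >> H ->
         P (A `&` H) = (\int[P]_(x in H) (g x)%:E)%E).

Definition ci_vars (P : probability Omega R) (I : Type)
    (X : I -> nat -> Omega -> R) (a b c : set (I * nat)) : Prop :=
  cond_indep P (sigma_vars X a) (sigma_vars X b) (sigma_vars X c).

Definition ts_baseline (I : finType) (W : {set I})
    (X : I -> nat -> Omega -> R) : Prop :=
  forall i t, (i \in W -> t = 0%N) -> measurable_fun setT (X i t).

Definition dsep_markov (P : probability Omega R) (I : finType) (W : {set I})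
    (t' : nat) (E : I * nat -> I * nat -> Prop)
    (X : I -> nat -> Omega -> R) : Prop :=
  forall a b c : set (I * nat),
    a `<=` valid_node W t' -> b `<=` valid_node W t' ->
    c `<=` valid_node W t' ->
    a `&` b = set0 -> a `&` c = set0 -> b `&` c = set0 ->
    dsep (fun u v : (I * nat)%type => E u v) a b c -> ci_vars P X a b c.

Definition loc_indep (P : probability Omega R) (I : finType) (W : {set I})
    (X : I -> nat -> Omega -> R) (A B C : {set I}) (t' : nat) : Prop :=
  forall t, (1 <= t <= t')%N ->
    ci_vars P X
      [set v | v.1 \in A /\ (v.2 <= t.-1)%N /\ (v.1 \in W -> v.2 = 0%N)]
      [set v | v.1 \in B /\ v.2 = t]
      [set v | v.1 \in B :|: C /\ (v.2 <= t.-1)%N /\ (v.1 \in W -> v.2 = 0%N)].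

End Prob.

(* Fix 1 <= t <= t'; by the Markov property it suffices to d-separate, in D_t', the
   nodes of A before t from B at time t given the past of B ∪ C.  Suppose a
   d-connecting path exists.  Its colliders are ancestors of the conditioning set,
   hence lie before t, so once the path reaches time t it runs along contemporaneous,
   i.e. tailed, edges into B: those nodes lie in an^V_•(B) ∪ B.  Forgetting time maps
   the path to a walk in D^- from A to B.  Cut it at its first node of
   Bs = (an^V_•(B) ∩ C) ∪ B and reroute every collider that is an ancestor of Bs but
   not of Cs = C \ an^V_•(B) along a directed path into Bs; the result is a walk from A
   to Bs, avoiding edges out of Bs, that is d-connecting given Cs.  Removing its loops
   gives a path contradicting the δ-separation. *)

From HB Require Import structures.
From mathcomp Require Import all_boot all_order all_algebra.
From mathcomp Require Import all_classical all_reals all_analysis.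
From mathcomp Require Import zify.
From Stdlib Require Import Classical.

Set Implicit Arguments.
Unset Strict Implicit.
Unset Printing Implicit Defensive.

Section Walks.
Variable T : eqType.
Implicit Types (G Ga : T -> T -> Prop) (A B C : T -> Prop) (x y z : T)
  (s p q r : seq (bool * T)).

Lemma steps_ok_cat G x p r :
  steps_ok G x (p ++ r) <-> steps_ok G x p /\ steps_ok G (walk_end x p) r.
Proof.
elim: p x => [|[d y] p IH] x /=; first tauto.
by rewrite IH /walk_end /=; tauto.
Qed.

Lemma walk_end_cat x p r : walk_end x (p ++ r) = walk_end (walk_end x p) r.
Proof. by rewrite /walk_end map_cat last_cat. Qed.

Lemma walk_end_rcons x p d y : walk_end x (rcons p (d, y)) = y.
Proof. by rewrite /walk_end map_rcons last_rcons. Qed.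

Lemma steps_ok_rcons G x p d y :
  steps_ok G x (rcons p (d, y)) <->
  steps_ok G x p /\ (if d then G (walk_end x p) y else G y (walk_end x p)).
Proof. by rewrite -cats1 steps_ok_cat /=; tauto. Qed.

Lemma walk_interior_cat p a b r :
  walk_interior (rcons p a ++ b :: r) =
  walk_interior (rcons p a) ++ (a.2, a.1 && ~~ b.1) :: walk_interior (b :: r).
Proof.
case: a b => [da ya] [db yb].
elim: p => [|[dc yc] p IH] //=.
by case: p IH => [|[de ye] p] //= ->.
Qed.

Lemma walk_interior_rcons p a b :
  walk_interior (rcons (rcons p a) b) =
  rcons (walk_interior (rcons p a)) (a.2, a.1 && ~~ b.1).
Proof. by rewrite -cats1 walk_interior_cat; case: b => ? ? /=; rewrite cats1. Qed.

Lemma walk_interior_prefix p r :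
  {subset walk_interior p <= walk_interior (p ++ r)}.
Proof.
case/lastP: p => [|p a] // yc; case: r => [|b r]; first by rewrite cats0.
by rewrite walk_interior_cat mem_cat => ->.
Qed.

Lemma walk_interior_suffix p r :
  {subset walk_interior r <= walk_interior (p ++ r)}.
Proof.
case/lastP: p => [|p a] // yc; case: r => [|b r] //.
by rewrite walk_interior_cat mem_cat in_cons => ->; rewrite !orbT.
Qed.

Definition d_open Ga C (yc : T * bool) : Prop :=
  (yc.2 -> anc_plus Ga C yc.1) /\ (~~ yc.2 -> ~ C yc.1).

Definition weakly_open Ga B C (yc : T * bool) : Prop :=
  (yc.2 -> anc_plus Ga (fun v => B v \/ C v) yc.1) /\ (~~ yc.2 -> ~ C yc.1).

Definition open_walk G Ga C x s : Prop :=
  steps_ok G x s /\ {in walk_interior s, forall yc, d_open Ga C yc}.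

Definition cut_graph Ga B x y : Prop := Ga x y /\ ~ B x.

Lemma mem_walk_interior_cons d v s yc :
  yc \in walk_interior ((d, v) :: s) -> yc.1 = v \/ yc \in walk_interior s.
Proof. by case: s => [|[d2 w] s] //=; rewrite in_cons => /orP[/eqP ->|]; auto. Qed.

Lemma walk_interior_nodes s yc : yc \in walk_interior s -> yc.1 \in map snd s.
Proof.
elim: s => [|[d y] s IH] //= /mem_walk_interior_cons [->|/IH]; first exact: mem_head.
by rewrite in_cons => ->; rewrite orbT.
Qed.

Lemma mem_steps_interior x s st :
  st \in s ->
  (exists d, (st.2, st.1 && ~~ d) \in walk_interior s) \/ st.2 = walk_end x s.
Proof.
elim: s x => [|[d y] s IH] x //=; rewrite in_cons => /orP[/eqP ->|/(IH y)].
  case: s {IH} => [|[d2 w] s]; [by right | left; exists d2; exact: mem_head].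
case=> [[d' Hin]|->]; last by right.
by left; exists d'; case: s Hin {IH} => [|[d2 w] s] //= Hin; rewrite in_cons Hin orbT.
Qed.

Lemma step_into_conditioned_node Ga C x s st :
  {in walk_interior s, forall yc, d_open Ga C yc} -> st \in s ->
  C st.2 -> st.2 <> walk_end x s -> st.1.
Proof.
move=> Hopen Hst HC; case: (mem_steps_interior x Hst) => [[d /Hopen [_ Hn]] _|//].
by apply/negPn/negP => Hst1; apply: Hn HC; rewrite /= (negbTE Hst1).
Qed.

Lemma anc_plus_ind Ga C (P : T -> Prop) :
  (forall v, C v -> P v) -> (forall u v, Ga u v -> P v -> P u) ->
  forall u, anc_plus Ga C u -> P u.
Proof.
move=> HC Hstep u [l []]; elim: l u => [|v l IH] u /=; first by move=> _ /HC.
by move=> [Huv Hl'] Hl; apply: Hstep Huv (IH v Hl' Hl).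
Qed.

Lemma anc_plus_refl Ga C v : C v -> anc_plus Ga C v.
Proof. by exists [::]. Qed.

Lemma anc_plus_step Ga C u v : Ga u v -> anc_plus Ga C v -> anc_plus Ga C u.
Proof. by move=> Huv [l [Hl Hlast]]; exists (v :: l). Qed.

Lemma anc_plus_first_hit Ga C u :
  anc_plus Ga C u ->
  exists l, [/\ dwalk Ga u l, C (last u l) & {in belast u l, forall v, ~ C v}].
Proof.
move=> [l []]; elim: l u => [|v l IH] u /=; first by exists [::].
move=> [Huv Hl'] Hl; have [Cu|nCu] := classic (C u); first by exists [::].
have [l' [Hw Hlast Hb]] := IH v Hl' Hl.
exists (v :: l'); split=> // w; rewrite /= in_cons => /orP[/eqP -> //|]; exact: Hb.
Qed.

(* The walk leaves z forward and returns to it backward, so its first collider is a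
   descendant of z. *)
Lemma anc_plus_of_forward_start G Ga C z w q :
  (forall u v, G u v -> Ga u v) -> steps_ok G z ((true, w) :: q) ->
  {in walk_interior ((true, w) :: q), forall yc : T * bool, yc.2 -> anc_plus Ga C yc.1} ->
  ~~ (last (true, w) q).1 -> anc_plus Ga C z.
Proof.
move=> HG; elim: q z w => [|[d u] q IH] z w //= [Hzw Hs] Hcol Hlast.
apply: anc_plus_step (HG _ _ Hzw) _.
case: d Hs Hcol Hlast => Hs Hcol Hlast.
- by apply: IH Hs _ Hlast => yc Hyc; apply: Hcol; rewrite in_cons Hyc orbT.
- by apply: (Hcol (w, true)); rewrite ?mem_head.
Qed.

Lemma walk_split_at x s :
  x \in map snd s ->
  exists q r, [/\ s = q ++ r, q != [::] & forall y, walk_end y q = x].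
Proof.
elim: s => [|[d y] s IH] //=; rewrite in_cons => /orP[/eqP ->|].
  by exists [:: (d, y)], s.
move=> /IH [q [r [-> Hq Hend]]]; exists ((d, y) :: q), r; split=> // z.
by case: q Hq Hend => [|a q] // _ /(_ y).
Qed.

Lemma walk_loop_split x s :
  ~~ uniq (walk_nodes x s) ->
  exists p q r, [/\ s = p ++ q ++ r, q != [::] &
    walk_end (walk_end x p) q = walk_end x p].
Proof.
elim: s x => [|[d y] s IH] x //=.
rewrite /walk_nodes /= negb_and negbK => /orP[|].
  rewrite in_cons => /orP[/eqP <-|]; first by exists [::], [:: (d, x)], s.
  move=> /walk_split_at [q [r [-> Hq Hend]]].
  by exists [::], ((d, y) :: q), r; split=> //; apply: Hend.
by move=> /IH [p [q [r [-> Hq Hloop]]]]; exists ((d, y) :: p), q, r.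
Qed.

Lemma open_walk_drop_loop G Ga C x p q r :
  (forall u v, G u v -> Ga u v) -> open_walk G Ga C x (p ++ q ++ r) ->
  q != [::] -> walk_end (walk_end x p) q = walk_end x p ->
  open_walk G Ga C x (p ++ r).
Proof.
move=> HG [Hs Hopen] Hq Hloop.
move: Hs; rewrite !steps_ok_cat Hloop => -[Hp [Hq' Hr]].
split; first by rewrite steps_ok_cat.
have Hopen_q : {in walk_interior q, forall yc, d_open Ga C yc}.
  by move=> yc /(walk_interior_prefix r) /(walk_interior_suffix p) /Hopen.
case/lastP: p Hopen Hp Hq' Hr Hloop => [|p [da z]] Hopen Hp Hq' Hr Hloop.
  by move=> yc /(walk_interior_suffix q) /Hopen.
rewrite walk_end_rcons in Hq' Hr Hloop.
case: r Hopen Hr => [|b r] Hopen Hr.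
  by rewrite cats0 => yc /(walk_interior_prefix (q ++ [::])) /Hopen.
case: q Hq Hq' Hloop Hopen_q Hopen => [//|b' q'] _ Hq' Hloop Hopen_q Hopen.
(* The junction point z of p ++ r also occurs twice in p ++ q ++ r, once before and
   once after the loop q. *)
have J1 : d_open Ga C (z, da && ~~ b'.1).
  by apply: Hopen; rewrite /= walk_interior_cat mem_cat mem_head orbT.
case/lastP E': (b' :: q') Hloop => [//|q1 e] Hez.
have He2 : e.2 = z by rewrite -Hez; case: e {E' Hez} => ? ?; rewrite walk_end_rcons.
have J2 : d_open Ga C (z, e.1 && ~~ b.1).
  rewrite -He2; apply: Hopen.
  by rewrite E' catA -rcons_cat walk_interior_cat mem_cat mem_head orbT.
move=> yc; rewrite walk_interior_cat mem_cat in_cons => /orP[|/orP[/eqP -> /=|]].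
- by move=> /(walk_interior_prefix (b' :: q' ++ b :: r)) /Hopen.
- case: J1 J2 => [J1c J1n] [J2c J2n]; split.
  + case/andP=> Hda Hb; rewrite Hda /= in J1c.
    have [Hb'|Hb'] := boolP b'.1; last exact: J1c.
    have [He|He] := boolP e.1; first by apply: J2c; rewrite He Hb.
    case: b' Hb' Hq' E' Hopen_q {J1c J1n Hopen} => [[] w] //= _ Hq' E' Hopen_q.
    apply: (anc_plus_of_forward_start HG Hq') => [yc' /Hopen_q []//|].
    by have := congr1 (last (true, w)) E'; rewrite /= last_rcons => ->.
  + rewrite negb_and negbK => /orP[Hda|Hb]; first by apply: J1n; rewrite (negbTE Hda).
    by apply: J2n; rewrite Hb andbF.
- move=> /(walk_interior_suffix (b' :: q')).
  by move=> /(walk_interior_suffix (rcons p (da, z))) /Hopen.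
Qed.

Lemma sep_gen_no_open_walk G Ga A B C x s :
  (forall u v, G u v -> Ga u v) -> sep_gen G Ga A B C ->
  open_walk G Ga C x s -> A x -> B (walk_end x s) -> False.
Proof.
move=> HG Hsep; elim: {s}_.+1 {-2}s (ltnSn (size s)) => // n IH s Hn Hs Hx Hend.
have [Hu|/walk_loop_split [p [q [r [Es Hq Hloop]]]]] := boolP (uniq (walk_nodes x s)).
  have [yc Hyc] := Hsep x s (conj Hs.1 Hu) Hx Hend.
  by have [Hc Hnc] := Hs.2 yc Hyc; case=> -[] => [/Hnc|/Hc].
subst s; apply: (IH (p ++ r)) Hx _.
- by move: Hn; rewrite !size_cat; case: q Hq {Hs Hloop Hend} => //= ? ? _; lia.
- exact: open_walk_drop_loop Hs Hq Hloop.
- by move: Hend; rewrite !walk_end_cat Hloop -walk_end_cat.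
Qed.

Lemma sep_gen_of_no_open_path G Ga A B C :
  (forall x s, is_path G x s -> A x -> B (walk_end x s) ->
     {in walk_interior s, forall yc, d_open Ga C yc} -> False) ->
  sep_gen G Ga A B C.
Proof.
move=> Hno x s Hp Hx Hend; apply: NNPP => Hblocked.
apply: (Hno x s Hp Hx Hend) => yc Hyc; split=> Hcol.
- by apply: NNPP => Hanc; apply: Hblocked; exists yc => //; right.
- by move=> HC; apply: Hblocked; exists yc => //; left.
Qed.

Lemma walk_cut_first_hit Ga B x s :
  steps_ok Ga x s -> ~ B x -> B (walk_end x s) ->
  {in s, forall st : bool * T, B st.2 -> st.1} ->
  exists q r, [/\ s = q ++ r, steps_ok (cut_graph Ga B) x q & B (walk_end x q)].
Proof.
elim: s x => [|[d y] s IH] x //= [Hxy Hs] Hx Hend Hfwd.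
have [Hy|Hy] := classic (B y).
  have Hd : d by apply: (Hfwd (d, y)); rewrite ?mem_head.
  by exists [:: (d, y)], s; rewrite Hd in Hxy *.
have [q [r [-> Hq Hqend]]] : exists q r,
    [/\ s = q ++ r, steps_ok (cut_graph Ga B) y q & B (walk_end y q)].
  by apply: IH => // st Hst; apply: Hfwd; rewrite in_cons Hst orbT.
by exists ((d, y) :: q), r; split=> //=; case: d Hxy {Hfwd Hend}.
Qed.

Lemma walk_end_forward z l : walk_end z (map (pair true) l) = last z l.
Proof. by rewrite /walk_end -map_comp map_id. Qed.

Lemma open_walk_extend Ga B C x q z l :
  open_walk (cut_graph Ga B) Ga C x (rcons q (true, z)) -> dwalk Ga z l ->
  {in belast z l, forall v, ~ B v /\ ~ C v} ->
  open_walk (cut_graph Ga B) Ga C x (rcons q (true, z) ++ map (pair true) l).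
Proof.
elim: l q z => [|w l IH] q z; first by rewrite cats0.
move=> [Hs Hopen] /= [Hzw Hl] Hbel.
have [HzB HzC] := Hbel z (mem_head _ _).
rewrite -cat_rcons; apply: IH Hl _ => [|v Hv]; last first.
  by apply: Hbel; rewrite in_cons Hv orbT.
split; first by apply/steps_ok_rcons; rewrite walk_end_rcons.
by move=> yc; rewrite walk_interior_rcons mem_rcons in_cons => /orP[/eqP -> //|/Hopen].
Qed.

Lemma open_walk_or_escape Ga B C x q :
  steps_ok (cut_graph Ga B) x q ->
  {in walk_interior q, forall yc, weakly_open Ga B C yc} ->
  (exists2 s, open_walk (cut_graph Ga B) Ga C x s & B (walk_end x s)) \/
  {in walk_interior q, forall yc, d_open Ga C yc}.
Proof.
elim/last_ind: q => [|q [d y] IH] Hs Hweak; first by right.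
case/lastP: q IH Hs Hweak => [|q [d1 z]] IH Hs Hweak; first by right.
rewrite walk_interior_rcons in Hweak *.
have [Hsq _] := (steps_ok_rcons _ _ _ _ _).1 Hs.
have Hweak_q : {in walk_interior (rcons q (d1, z)), forall yc, weakly_open Ga B C yc}.
  by move=> yc Hyc; apply: Hweak; rewrite mem_rcons in_cons Hyc orbT.
have [Hesc|Hopen] := IH Hsq Hweak_q; first by left.
have [Hz|Hz] := classic (d_open Ga C (z, d1 && ~~ d)).
  by right=> yc; rewrite mem_rcons in_cons => /orP[/eqP -> //|/Hopen].
left; have [Hanc Hnc] : weakly_open Ga B C (z, d1 && ~~ d).
  by apply: Hweak; rewrite mem_rcons mem_head.
have Hcol : d1 && ~~ d.
  by apply/negP => Hn; apply: Hz; split=> //= _; apply: Hnc; rewrite Hn.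
have HnC : ~ anc_plus Ga C z.
  by move=> HC; apply: Hz; split=> // Hn; rewrite Hcol in Hn.
have {}Hanc : anc_plus Ga (fun v => B v \/ C v) z := Hanc Hcol.
move: Hcol Hsq Hopen => /andP[-> _] Hsq Hopen.
have Hwalk : open_walk (cut_graph Ga B) Ga C x (rcons q (true, z)) by [].
(* z is a collider that is an ancestor of B but not of C: either stop at z or follow
   a directed path from z to its first node in B. *)
have [HzB|HzB] := classic (B z).
  by exists (rcons q (true, z)); rewrite ?walk_end_rcons.
have [l [Hl Hlast Hbel]] := anc_plus_first_hit Hanc.
case: Hlast => [HB|HC]; last by case: HnC; exists l.
exists (rcons q (true, z) ++ map (pair true) l).
  by apply: open_walk_extend => // v /Hbel; tauto.
by rewrite walk_end_cat walk_end_rcons walk_end_forward.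
Qed.

Lemma cut_open_walk_of_weakly_open Ga B C x s :
  steps_ok Ga x s -> ~ B x -> B (walk_end x s) ->
  {in s, forall st : bool * T, B st.2 -> st.1} ->
  {in walk_interior s, forall yc, weakly_open Ga B C yc} ->
  exists2 s', open_walk (cut_graph Ga B) Ga C x s' & B (walk_end x s').
Proof.
move=> Hs Hx Hend Hfwd Hweak.
have [q [r [Es Hq Hqend]]] := walk_cut_first_hit Hs Hx Hend Hfwd.
have Hweak_q : {in walk_interior q, forall yc, weakly_open Ga B C yc}.
  by move=> yc /(walk_interior_prefix r); rewrite -Es => /Hweak.
by have [//|Hopen] := open_walk_or_escape Hq Hweak_q; exists q.
Qed.

End Walks.

Section MapWalk.
Variables (T U : eqType) (f : T -> U).

Definition map_walk (s : seq (bool * T)) : seq (bool * U) :=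
  [seq (st.1, f st.2) | st <- s].

Lemma steps_ok_map (G : T -> T -> Prop) (H : U -> U -> Prop) x s :
  (forall u v, G u v -> H (f u) (f v)) ->
  steps_ok G x s -> steps_ok H (f x) (map_walk s).
Proof.
move=> Hf; elim: s x => [|[d y] s IH] x //= [Hxy Hs].
by split; [case: d Hxy => /Hf | exact: IH].
Qed.

Lemma walk_end_map x s : walk_end (f x) (map_walk s) = f (walk_end x s).
Proof. by elim: s x => [|[d y] s IH] x //; exact: IH. Qed.

Lemma walk_interior_map s :
  walk_interior (map_walk s) = [seq (f yc.1, yc.2) | yc <- walk_interior s].
Proof. by elim: s => [|[d y] s IH] //=; case: s IH => [|[d2 z] s] //= ->. Qed.

Lemma anc_plus_map (G : T -> T -> Prop) (H : U -> U -> Prop) C D u :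
  (forall u v, G u v -> H (f u) (f v)) -> (forall v, C v -> D (f v)) ->
  anc_plus G C u -> anc_plus H D (f u).
Proof.
move=> Hf HCD; apply: (anc_plus_ind (P := fun u => anc_plus H D (f u))).
  by move=> v /HCD; apply: anc_plus_refl.
move=> v w /Hf; exact: anc_plus_step.
Qed.

End MapWalk.

Section Unrolled.
Local Open Scope classical_set_scope.
Variables (I : finType) (W : {set I}) (arr tail : rel I) (t' : nat)
  (E : I * nat -> I * nat -> Prop).
Hypothesis E_valid : forall u v, E u v -> valid_node W t' u /\ valid_node W t' v.
Hypothesis E_time : forall u v, E u v -> (u.2 <= v.2)%N.
Hypothesis E_arr : forall u v, E u v -> arr u.1 v.1.
Hypothesis E_tail : forall u v, E u v -> u.2 = v.2 -> tail u.1 v.1.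

Definition past (S : {set I}) (t : nat) : set (I * nat) :=
  [set v | v.1 \in S /\ (v.2 <= t.-1)%N /\ (v.1 \in W -> v.2 = 0%N)].

Definition present (S : {set I}) (t : nat) : set (I * nat) :=
  [set v | v.1 \in S /\ v.2 = t].

Lemma steps_ok_valid x s :
  steps_ok E x s -> {in map snd s, forall y, valid_node W t' y}.
Proof.
elim: s x => [|[d y] s IH] x //= [Hxy Hs] z.
rewrite in_cons => /orP[/eqP ->|]; last exact: IH Hs z.
by case: d Hxy => /E_valid [].
Qed.

Lemma anc_plus_before (c : set (I * nat)) n u :
  (forall v, c v -> (v.2 <= n)%N) -> anc_plus E c u -> (u.2 <= n)%N.
Proof.
move=> Hc; apply: (anc_plus_ind (P := fun u => (u.2 <= n)%N)) => // v w /E_time.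
exact: leq_trans.
Qed.

(* Colliders lie before t, so from time t on the walk can only follow contemporaneous,
   hence tailed, edges. *)
Lemma late_nodes_tail_chain (B : {set I}) t v din s :
  steps_ok E v s ->
  {in walk_interior ((din, v) :: s),
    forall yc : (I * nat) * bool, yc.2 -> (yc.1.2 < t)%N} ->
  ((t <= v.2)%N -> din) ->
  (walk_end v s).2 = t -> (walk_end v s).1 \in B ->
  {in walk_nodes v s, forall y, (t <= y.2)%N ->
     y.2 = t /\ anc_plus (fun i j => tail i j) (fun j => j \in B) y.1} /\
  {in s, forall st : bool * (I * nat), (t <= st.2.2)%N -> st.1}.
Proof.
elim: s v din => [|[d w] s IH] v din /=.
  move=> _ _ _ <- HB; split=> // y; rewrite /walk_nodes inE => /eqP -> _.
  by split=> //; exact: anc_plus_refl.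
move=> [Hvw Hs] Hcol Hin Hend HB.
have Hv_fwd : (t <= v.2)%N -> d.
  move=> Hv; apply/negPn/negP => Hd.
  have := Hcol (v, din && ~~ d) (mem_head _ _); rewrite Hin //= Hd => /(_ isT).
  by rewrite ltnNge Hv.
have Hw_fwd : (t <= w.2)%N -> d.
  move=> Hw; have [//|/negbTE Hd] := boolP d.
  by move: Hvw; rewrite Hd => /E_time Hwv; rewrite -Hd; apply: Hv_fwd (leq_trans Hw Hwv).
have Hcol_w : {in walk_interior ((d, w) :: s),
    forall yc : (I * nat) * bool, yc.2 -> (yc.1.2 < t)%N}.
  by move=> yc Hyc; apply: Hcol; rewrite in_cons Hyc orbT.
have [IHn IHs] := IH w d Hs Hcol_w Hw_fwd Hend HB.
split=> [y|st]; rewrite in_cons => /orP[/eqP ->|]; [|exact: IHn| |exact: IHs]; last first.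
  exact: Hw_fwd.
move=> Hv; have Hd := Hv_fwd Hv; rewrite Hd in Hvw.
have [Hw Hanc] := IHn w (mem_head _ _) (leq_trans Hv (E_time Hvw)).
have Hvt : v.2 = t by apply/eqP; rewrite eqn_leq Hv -Hw E_time.
by split=> //; apply: anc_plus_step (E_tail Hvw _) Hanc; rewrite Hvt.
Qed.

(* Bs and Cs stand for (an^V_•(B) ∩ C) ∪ B and C \ an^V_•(B). *)
Variables (A B C : {set I}) (Bs Cs : I -> Prop).
Hypothesis B_Bs : forall i, i \in B -> Bs i.
Hypothesis BC_split : forall i, i \in B :|: C <-> Bs i \/ Cs i.
Hypothesis tail_anc_notCs :
  forall i, i \notin W -> anc_plus (fun i j => tail i j) (fun j => j \in B) i -> ~ Cs i.
Hypothesis A_notBs : forall i, i \in A -> ~ Bs i.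
Hypothesis no_open_walk : forall x s,
  open_walk (cut_graph (fun i j => arr i j) Bs) (fun i j => arr i j) Cs x s ->
  x \in A -> Bs (walk_end x s) -> False.

Lemma unrolled_dsep t :
  (0 < t)%N -> dsep E (past A t) (present B t) (past (B :|: C) t).
Proof.
move=> Ht; have Htt : (t.-1 < t)%N by rewrite prednK.
apply: sep_gen_of_no_open_path => x s [Hs _] [HxA [Hx _]] [HendB Hend] Hopen.
set c := past (B :|: C) t in Hopen.
have Hvalid := steps_ok_valid Hs.
have Hcol_early : {in walk_interior ((true, x) :: s),
    forall yc : (I * nat) * bool, yc.2 -> (yc.1.2 < t)%N}.
  move=> yc /mem_walk_interior_cons [-> _|/Hopen [Hcol _] /Hcol].
    exact: leq_ltn_trans Hx Htt.
  move=> /(anc_plus_before (n := t.-1)) Hanc.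
  by apply: leq_ltn_trans (Hanc _) Htt => v [_ []].
have [Hlate Hfwd] := late_nodes_tail_chain Hs Hcol_early (fun _ => isT) Hend HendB.
have c_of_early v : valid_node W t' v -> (v.2 < t)%N -> v.1 \in B :|: C -> c v.
  by move=> [_ HW] Hv Hi; split=> //; split=> //; rewrite -ltnS prednK.
have [s' Hs' Hend'] : exists2 s', open_walk (cut_graph (fun i j => arr i j) Bs)
    (fun i j => arr i j) Cs x.1 s' & Bs (walk_end x.1 s').
  apply: (cut_open_walk_of_weakly_open (s := map_walk fst s)).
  - exact: steps_ok_map E_arr Hs.
  - exact: A_notBs.
  - by rewrite walk_end_map; apply: B_Bs.
  - move=> _ /mapP [st Hst ->] /= HBs.
    have [Hlt|Hge] := ltnP st.2.2 t; last exact: Hfwd.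
    apply: (step_into_conditioned_node (x := x) Hopen Hst) => [|Hst_end].
      apply: c_of_early Hlt _; first by apply: Hvalid; apply: map_f.
      by apply/BC_split; left.
    by move: Hlt; rewrite Hst_end Hend ltnn.
  - move=> yc'; rewrite walk_interior_map => /mapP [yc Hyc ->] /=.
    have [Hcol Hncol] := Hopen _ Hyc; split=> [/Hcol|/Hncol Hnc] /=.
      by apply: anc_plus_map E_arr _ => v [/BC_split].
    have Hy := Hvalid _ (walk_interior_nodes Hyc).
    have [Hlt|Hge] := ltnP yc.1.2 t.
      by move=> HCs; apply: Hnc; apply: c_of_early Hy Hlt _; apply/BC_split; right.
    have Hyn : yc.1 \in walk_nodes x s by rewrite in_cons (walk_interior_nodes Hyc) orbT.
    have [_ Hanc] := Hlate _ Hyn Hge.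
    apply: tail_anc_notCs Hanc; apply/negP => /(proj2 Hy) Hy0.
    by move: Hge Ht; rewrite Hy0 leqn0 => /eqP ->.
exact: no_open_walk Hs' HxA Hend'.
Qed.

End Unrolled.

Lemma proper_pair_edges (I : finType) (W : {set I}) (arr tail : rel I) t'
    (E : I * nat -> I * nat -> Prop) :
  tailed_graph W arr tail -> proper_pair W arr tail t' E ->
  [/\ forall u v, E u v -> (u.2 <= v.2)%N,
      forall u v, E u v -> arr u.1 v.1 &
      forall u v, E u v -> u.2 = v.2 -> tail u.1 v.1].
Proof.
move=> [tail_arr _] [[E_time [Harr [Htail _]]]|Hunr].
  split=> // [[i s] [j u] Huv|[i s] [j u] Huv /= Hsu].
    by apply/Harr; exists s, u; split=> //; exact: E_time Huv.
  by apply/Htail; exists u; rewrite -{1}Hsu.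
split=> u v /Hunr [_ [_ [[Hlt Ha]|[Heq Ht]]]] //.
- exact: ltnW.
- by rewrite Heq.
- exact: tail_arr.
- by move=> Heq; move: Hlt; rewrite Heq ltnn.
Qed.

Lemma loc_indep_of_dsep (I : finType) (V W : {set I}) (t' : nat)
    (E : I * nat -> I * nat -> Prop) (d : measure_display)
    (Omega : measurableType d) (R : realType) (P : probability Omega R)
    (X : I -> nat -> Omega -> R) (A B C : {set I}) :
  [disjoint V & W] -> B \subset V -> [disjoint A & B] -> [disjoint A & C] ->
  dsep_markov P W t' E X ->
  (forall t, (0 < t <= t')%N ->
     dsep E (past W A t) (present B t) (past W (B :|: C) t)) ->
  loc_indep P W X A B C t'.
Proof.
move=> HVW HBV HAB HAC Hmarkov Hdsep t /andP [Ht Htt'].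
have Htt : (t.-1 < t)%N by rewrite prednK.
have past_valid S v : past W S t v -> valid_node W t' v.
  by move=> [_ [Hv HW]]; split=> //; exact: leq_trans Hv (leq_trans (leq_pred t) Htt').
apply: Hmarkov; last by apply: Hdsep; rewrite Ht.
- exact: past_valid.
- move=> [i s] /= [Hi ->]; split=> // HiW.
  by move: (disjointFr HVW (fintype.subsetP HBV i Hi)); rewrite HiW.
- exact: past_valid.
- by rewrite -subset0 => -[i s] /= [[_ [Hs _]] [_ Hst]]; move: Hs; rewrite Hst leqNgt Htt.
- rewrite -subset0 => -[i s] /= [[Hi _] [+ _]].
  by rewrite inE (disjointFr HAB Hi) (disjointFr HAC Hi).
- by rewrite -subset0 => -[i s] /= [[_ Hst] [_ [Hs _]]]; move: Hs; rewrite Hst leqNgt Htt.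
Qed.

Theorem theorem1 (I : finType) (V W : {set I}) (arr tail : rel I) (t' : nat)
  (E : I * nat -> I * nat -> Prop)
  (d : measure_display) (Omega : measurableType d) (R : realType)
  (P : probability Omega R) (X : I -> nat -> Omega -> R)
  (A B C : {set I}) :
  [disjoint V & W] -> V :|: W = [set: I] ->
  tailed_graph W arr tail ->
  (1 <= t')%N ->
  dag_on W t' E ->
  proper_pair W arr tail t' E ->
  ts_baseline W X ->
  dsep_markov P W t' E X ->
  [disjoint A & B] -> [disjoint A & C] -> [disjoint B & C] -> B \subset V ->
  (forall i, i \in A -> ~ an_tail tail B i) ->
  delta_sep (fun i j : I => arr i j)
    (fun i => (an_tail_V V tail B i /\ i \in C) \/ i \in B)
    (fun i => i \in A)
    (fun i => i \in C /\ ~ an_tail_V V tail B i) ->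
  loc_indep P W X A B C t'.
Proof.
move=> HVW HVWall Htg _ [E_valid _] Hpp _ Hmarkov HAB HAC HBC HBV _ Hdelta.
have [E_time E_arr E_tail] := proper_pair_edges Htg Hpp.
apply: (loc_indep_of_dsep HVW HBV HAB HAC Hmarkov) => t /andP [Ht _].
pose Bs i := (an_tail_V V tail B i /\ i \in C) \/ i \in B.
pose Cs i := i \in C /\ ~ an_tail_V V tail B i.
apply: (unrolled_dsep E_valid E_time E_arr E_tail (Bs := Bs) (Cs := Cs)) => //.
- by move=> i; right.
- move=> i; rewrite inE.
  split=> [/orP[HiB|HiC]|[[[_ HiC]|HiB]|[HiC _]]]; rewrite ?HiB ?HiC ?orbT //.
    by left; right.
  by have [HV|HV] := classic (an_tail_V V tail B i); [left; left|right].
- move=> i HiW Hanc [HiC]; apply; split.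
    have : i \in V :|: W by rewrite HVWall inE.
    by rewrite inE (negbTE HiW) orbF.
  by split=> //; apply/negP => /(disjointFr HBC); rewrite HiC.
- move=> i HiA [[_ HiC]|HiB]; first by move: (disjointFr HAC HiA); rewrite HiC.
  by move: (disjointFr HAB HiA); rewrite HiB.
- by move=> x s Hs HxA; apply: sep_gen_no_open_walk Hdelta Hs HxA => u v [].
Qed.
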